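(* For every integer $n\geq 2$ there exists a balanced bipartite graph $\mathcal{B}$ on $2n$ vertices with $\delta(\mathcal{B})=\lceil \frac{n}{2}\rceil$ and $f(\mathcal{B})=n+2$.
   Context: All graphs are finite and simple. A balanced bipartite graph on $2n$ vertices is a bipartite graph with a given bipartition $(V_1,V_2)$ where $|V_1|=|V_2|=n$. $\delta(G)$ denotes the minimum degree of $G$. The forest number $f(G)$ is the maximum cardinality of a subset $S\subseteq V(G)$ such that the induced subgraph $G[S]$ is a forest. *)

From mathcomp Require Import all_boot all_order.
Set Implicit Arguments. Unset Strict Implicit. Unset Printing Implicit Defensive.

Definition simple_graph (T : finType) (e : rel T) : Prop :=
  symmetric e /\ irreflexive e.

(* Balanced bipartite graph on 2n vertices: vertex set 'I_n + 'I_n, with the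
   bipartition V1 = inl-vertices, V2 = inr-vertices; no edge inside a part. *)
Definition bip_vertex (n : nat) : finType := ('I_n + 'I_n)%type.

Definition balanced_bipartite (n : nat) (e : rel (bip_vertex n)) : Prop :=
  simple_graph e /\
  (forall x y : 'I_n, ~~ e (inl x) (inl y)) /\
  (forall x y : 'I_n, ~~ e (inr x) (inr y)).

Definition deg (T : finType) (e : rel T) (v : T) : nat := #|[set u | e v u]|.

Definition min_degree_eq (T : finType) (e : rel T) (d : nat) : Prop :=
  (forall v, d <= deg e v) /\ (exists v, deg e v = d).

Definition has_cycle_in (T : finType) (e : rel T) (S : {set T}) : Prop :=
  exists s : seq T, [/\ uniq s, 3 <= size s, all (fun v => v \in S) s & cycle e s].

Definition induces_forest (T : finType) (e : rel T) (S : {set T}) : Prop :=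
  ~ has_cycle_in e S.

Definition forest_number_eq (T : finType) (e : rel T) (k : nat) : Prop :=
  (exists S : {set T}, induces_forest e S /\ #|S| = k) /\
  (forall S : {set T}, induces_forest e S -> #|S| <= k).

From mathcomp Require Import all_boot all_order.
From mathcomp Require Import zify.
Set Implicit Arguments. Unset Strict Implicit. Unset Printing Implicit Defensive.

(* Let h = uphalf n and call the vertices of index < h low.  The graph is the
   union of two complete bipartite blocks, K_{h,h} on the low vertices and
   K_{n-h,n-h} on the high ones, with a matching joining each low vertex b <= h-2
   to the high vertex b+h on the other side.  Low vertices have degree h or h+1
   (exactly h for b = h-1); high vertices have degree n-h, or n-h+1 when
   matched, and for odd n every high vertex is matched, so all degrees are >= h.
   An induced forest contains no 4-cycle, so it meets one side of each block in
   at most one vertex: it has at most (h+1) + (n-h+1) = n+2 vertices.  The whole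
   left side together with the right vertices h-1 and n-1 attains this, since
   every cycle through these two hubs would need two common neighbours of them,
   and they have only one, the left vertex n-1-h. *)

Lemma cycle_neighbours (T : eqType) (e : rel T) (s : seq T) (v : T) :
  symmetric e -> uniq s -> 3 <= size s -> cycle e s -> v \in s ->
  exists y z, [/\ y \in s, z \in s, y != z, e v y & e v z].
Proof.
move=> sym_e us ss cs vs.
case: (rot_to vs) => i s' rot_s.
have us' : uniq (v :: s') by rewrite -rot_s rot_uniq.
have cs' : cycle e (v :: s') by rewrite -rot_s rot_cycle.
have ss' : 3 <= size (v :: s') by rewrite -rot_s size_rot.
have mem x : x \in v :: s' -> x \in s by rewrite -rot_s mem_rot.
case: s' rot_s us' cs' ss' mem => [|w t] // _ us' cs' ss' mem.
exists w, (last w t); split.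
- by apply: mem; rewrite !inE eqxx orbT.
- by apply: mem; rewrite in_cons mem_last orbT.
- case: t us' ss' {cs' mem} => [|u t] //= us' _.
  apply/eqP => Hw; move: us' => /and3P[_ H _].
  by rewrite Hw mem_last in H.
- by move: cs'; rewrite /= => /andP[].
- by move: cs'; rewrite /= rcons_path => /and3P[_ _]; rewrite sym_e.
Qed.

Lemma induces_forest_two_hubs (T : finType) (e : rel T) (S : {set T}) (a b : T) :
  symmetric e ->
  {in S &, forall x y, e x y -> (x \in [:: a; b]) != (y \in [:: a; b])} ->
  {in S &, forall x y, e x a -> e x b -> e y a -> e y b -> x = y} ->
  induces_forest e S.
Proof.
move=> sym_e edgeD common [s [us ss /allP sS cs]].
have nbr v := @cycle_neighbours T e s v sym_e us ss cs.
have hubs x : x \in s -> x \notin [:: a; b] -> [/\ e x a, e x b, a \in s & b \in s].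
  move=> xs xD; have [y [z [ys zs yz xy xz]]] := nbr x xs.
  have inD w : w \in s -> e x w -> w \in [:: a; b].
    by move=> ws /(edgeD _ _ (sS _ xs) (sS _ ws)); rewrite (negbTE xD); case: (w \in _).
  have [yD zD] := (inD y ys xy, inD z zs xz).
  move: yD zD yz; rewrite !inE => /orP[]/eqP Ey /orP[]/eqP Ez; subst y z;
    by rewrite ?eqxx.
have /allPn [x xs xD] : ~~ all (mem [:: a; b]) s.
  apply: contraTN ss => /allP sD; rewrite -ltnNge ltnS.
  exact: (uniq_leq_size us sD).
have [_ _ As _] := hubs x xs xD.
have [y [z [ys zs yz ay az]]] := nbr a As.
have outD w : w \in s -> e a w -> w \notin [:: a; b].
  by move=> ws /(edgeD _ _ (sS _ As) (sS _ ws)); rewrite inE eqxx; case: (w \in _).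
have [ya yb _ _] := hubs y ys (outD y ys ay).
have [za zb _ _] := hubs z zs (outD z zs az).
by move: yz; rewrite (common _ _ (sS _ ys) (sS _ zs) ya yb za zb) eqxx.
Qed.

Lemma forest_complete_bipartite (T : finType) (e : rel T) (S A B : {set T}) :
  symmetric e -> [disjoint A & B] -> {in A & B, forall x y, e x y} ->
  induces_forest e S -> (#|S :&: A| <= 1) || (#|S :&: B| <= 1).
Proof.
move=> sym_e dAB eAB forestS.
case: leqP => // /card_gt1P [x1 [x2 [/setIP[Sx1 Ax1] /setIP[Sx2 Ax2] x12]]].
case: leqP => // /card_gt1P [y1 [y2 [/setIP[Sy1 By1] /setIP[Sy2 By2] y12]]].
case: forestS; exists [:: x1; y1; x2; y2]; split => //.
- have xy x y : x \in A -> y \in B -> (x == y) = false.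
    by move=> Ax By; apply/negbTE; apply: contraTneq By => <-; rewrite (disjointFr dAB).
  by rewrite /= !inE !negb_or x12 y12 (xy x1 y1) ?(xy x1 y2) ?(xy x2 y2) // eq_sym xy.
- by rewrite /= Sx1 Sy1 Sx2 Sy2.
- by rewrite /= (sym_e y1) (sym_e y2) !eAB.
Qed.

Lemma forest_card_complete_bipartite (T : finType) (e : rel T) (S A B : {set T}) :
  symmetric e -> [disjoint A & B] -> {in A & B, forall x y, e x y} ->
  induces_forest e S -> #|S :&: (A :|: B)| <= maxn #|A| #|B| + 1.
Proof.
move=> sym_e dAB eAB forestS.
rewrite setIUr; apply: leq_trans (leq_card_setU _ _) _.
have leA : #|S :&: A| <= #|A| by apply/subset_leq_card/subsetIr.
have leB : #|S :&: B| <= #|B| by apply/subset_leq_card/subsetIr.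
by case/orP: (forest_complete_bipartite sym_e dAB eAB forestS); lia.
Qed.

Lemma forest_card_two_blocks n (P : {set 'I_n}) (e : rel (bip_vertex n))
    (S : {set bip_vertex n}) :
  symmetric e -> (forall i j, (i \in P) = (j \in P) -> e (inl i) (inr j)) ->
  induces_forest e S -> #|S| <= n + 2.
Proof.
move=> sym_e eP forestS.
have block (Q : {set 'I_n}) : (forall i j, i \in Q -> j \in Q -> e (inl i) (inr j)) ->
    #|S :&: (inl @: Q :|: inr @: Q)| <= #|Q| + 1.
  move=> eQ; rewrite -[#|Q|]maxnn -{1}(card_imset Q (@inl_inj _ 'I_n)).
  rewrite -(card_imset Q (@inr_inj 'I_n _)); apply: forest_card_complete_bipartite => //.
    rewrite disjoints_subset; apply/subsetP => _ /imsetP[i _ ->].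
    by rewrite inE; apply/imsetP => -[].
  by move=> _ _ /imsetP[i iQ ->] /imsetP[j jQ ->]; apply: eQ.
have cover :
    S = S :&: (inl @: P :|: inr @: P) :|: S :&: (inl @: (~: P) :|: inr @: (~: P)).
  rewrite -setIUr; apply/esym/setIidPl/subsetP => v _.
  have PC i : i \in P \/ i \in ~: P by rewrite inE; apply/orP/orbN.
  by case: v => i; case: (PC i) => iP;
    rewrite !inE ?(imset_f inl iP) ?(imset_f inr iP) ?orbT.
rewrite cover; apply: leq_trans (leq_card_setU _ _) _.
apply: leq_trans (leq_add (block P _) (block (~: P) _)) _.
- by move=> i j iP jP; apply: eP; rewrite iP jP.
- by move=> i j; rewrite !inE => /negbTE iP /negbTE jP; apply: eP; rewrite iP jP.
by rewrite addnACA cardsC card_ord.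
Qed.

Lemma card_ord_ltn n m : m <= n -> #|[set i : 'I_n | i < m]| = m.
Proof.
move=> mn; have inj : injective (widen_ord mn) by move=> a b [] /val_inj.
rewrite -[RHS]card_ord -cardsT -(card_imset _ inj); apply: eq_card => i.
rewrite inE; apply/idP/imsetP => [im | [k _ ->] /=]; last exact: ltn_ord.
by exists (Ordinal im); last apply: val_inj.
Qed.

Lemma card_ord_geq n m : m <= n -> #|[set i : 'I_n | m <= i]| = n - m.
Proof.
move=> mn; rewrite -[n in n - _]card_ord -(cardsC [set i : 'I_n | i < m]).
by rewrite (card_ord_ltn mn) addKn; apply: eq_card => i; rewrite !inE -leqNgt.
Qed.

Lemma card_sum_inlT (A B : finType) (Y : {set B}) :
  #|[set v : A + B | if v is inr b then b \in Y else true]| = #|A| + #|Y|.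
Proof.
rewrite -[#|A|]cardsT -(card_imset _ (@inl_inj A B)) -(card_imset Y (@inr_inj A B)).
rewrite -cardsUI; have -> : inl @: [set: A] :&: inr @: Y = set0.
  by apply/setP => v; rewrite !inE; apply/andP => -[/imsetP[a _ ->] /imsetP[]].
rewrite cards0 addn0; apply: eq_card => -[a|b]; rewrite !inE.
- by rewrite imset_f.
- by rewrite mem_imset; [case: imsetP => // -[] | exact: inr_inj].
Qed.

Section Construction.

Variables n h : nat.

Definition paired (a b : nat) := (a == b + h) && (b.+1 < h).

Definition adj (a b : nat) := [|| (a < h) == (b < h), paired a b | paired b a].

Definition graph : rel (bip_vertex n) := fun u v =>
  match u, v with
  | inl i, inr j | inr j, inl i => adj i j
  | _, _ => false
  end.

Lemma adjC a b : adj a b = adj b a.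
Proof. by rewrite /adj eq_sym [paired a b || _]orbC. Qed.

Lemma graph_sym : symmetric graph.
Proof. by move=> [i|i] [j|j]. Qed.

Lemma graph_balanced : balanced_bipartite graph.
Proof. by split; [split; [exact: graph_sym | case] | split]. Qed.

Lemma deg_graph_inl i : deg graph (inl i) = #|[set j : 'I_n | adj i j]|.
Proof.
rewrite /deg -[RHS](card_imset _ (@inr_inj 'I_n 'I_n)); apply: eq_card => -[j|j].
- by rewrite !inE /=; apply/esym/imsetP => -[].
- by rewrite !inE (mem_imset _ _ inr_inj) inE.
Qed.

Lemma deg_graph_inr j : deg graph (inr j) = #|[set i : 'I_n | adj j i]|.
Proof.
rewrite /deg -[RHS](card_imset _ (@inl_inj 'I_n 'I_n)); apply: eq_card => -[i|i].
- by rewrite !inE (mem_imset _ _ inl_inj) inE adjC.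
- by rewrite !inE /=; apply/esym/imsetP => -[].
Qed.

Lemma forest_card_graph S : induces_forest graph S -> #|S| <= n + 2.
Proof.
apply: (forest_card_two_blocks (P := [set i : 'I_n | i < h]) graph_sym) => i j.
by rewrite !inE /= /adj => ->; rewrite eqxx.
Qed.

Hypothesis h_half : n <= h + h <= n.+1.

Lemma card_adj_ge (i : 'I_n) : h <= #|[set j : 'I_n | adj i j]|.
Proof.
have hn : h <= n by lia.
have [lo | hi] := ltnP i h.
  rewrite -{1}(card_ord_ltn hn); apply/subset_leq_card/subsetP => j.
  by rewrite !inE /adj lo => ->.
have high_sub : [set j : 'I_n | h <= j] \subset [set j : 'I_n | adj i j].
  by apply/subsetP => j; rewrite !inE /adj ltnNge hi ltnNge => ->.
have := subset_leq_card high_sub; rewrite card_ord_geq //.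
case: (ltnP i.+1 (h + h)) => [has_pair | no_pair]; last by have := ltn_ord i; lia.
have jlt : i - h < n by lia.
suff : [set j : 'I_n | h <= j] \proper [set j : 'I_n | adj i j].
  by move/proper_card; rewrite card_ord_geq //; lia.
apply/properP; split => //; exists (Ordinal jlt); rewrite !inE /=; last by lia.
by rewrite /adj /paired; lia.
Qed.

Lemma adj_pivot j : 0 < h -> adj h.-1 j = (j < h).
Proof. by move=> h0; rewrite /adj /paired; lia. Qed.

Lemma graph_min_degree (p : 'I_n) : p = h.-1 :> nat -> min_degree_eq graph h.
Proof.
move=> pE; have h0 : 0 < h by have := ltn_ord p; lia.
split=> [[i|i] | ]; first by rewrite deg_graph_inl card_adj_ge.
  by rewrite deg_graph_inr card_adj_ge.
exists (inr p); rewrite deg_graph_inr -(@card_ord_ltn n h) ?pE; last lia.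
by apply: eq_card => j; rewrite !inE adj_pivot.
Qed.

Lemma adj_pivot_last i : 1 < n -> adj i h.-1 -> adj i n.-1 -> i + h = n.-1.
Proof. by rewrite /adj /paired; lia. Qed.

Definition forest_witness (p q : 'I_n) : {set bip_vertex n} :=
  [set v | if v is inr j then j \in [set p; q] else true].

Lemma graph_forest_witness (p q : 'I_n) :
  1 < n -> p = h.-1 :> nat -> q = n.-1 :> nat -> induces_forest graph (forest_witness p q).
Proof.
move=> n2 pE qE.
apply: (induces_forest_two_hubs (a := inr p) (b := inr q) graph_sym).
- move=> [i|i] [j|j]; rewrite !inE //= !(inj_eq inr_inj);
    [move=> _ -> | move=> -> _] => _; by case: eqP.
- move=> [i|i] [i'|i'] _ _ //=; rewrite pE qE => ip iq i'p i'q.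
  congr inl; apply: ord_inj; have := adj_pivot_last n2 ip iq.
  by have := adj_pivot_last n2 i'p i'q; lia.
Qed.

Lemma graph_forest_number (p q : 'I_n) :
  1 < n -> p = h.-1 :> nat -> q = n.-1 :> nat -> forest_number_eq graph (n + 2).
Proof.
move=> n2 pE qE; split; last exact: forest_card_graph.
exists (forest_witness p q); split; first exact: graph_forest_witness.
have pq : p != q by apply/eqP => /(congr1 (@nat_of_ord n)); rewrite pE qE; lia.
by rewrite card_sum_inlT card_ord cards2 pq.
Qed.

End Construction.

Theorem proposition2p2 (n : nat) :
  2 <= n ->
  exists e : rel (bip_vertex n),
    [/\ balanced_bipartite e,
        min_degree_eq e (uphalf n) &
        forest_number_eq e (n + 2)].
Proof.
move=> n2; set h := uphalf n.
have h_half : n <= h + h <= n.+1.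
  by rewrite /h; have := uphalf_half n; have := odd_double_half n; lia.
have hp : h.-1 < n by lia.
have hq : n.-1 < n by lia.
exists (graph h); split.
- exact: graph_balanced.
- exact: (graph_min_degree h_half (p := Ordinal hp)).
- exact: (graph_forest_number h_half (p := Ordinal hp) (q := Ordinal hq)).
Qed.
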